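(* Let $p>1$, $q>1$ with $p^{-1}+q^{-1}>1$. Then the following holds, with a constant $C_{p,q}$ depending only on $p$ and $q$. For every interval $[a;b]$ and every two functions $f,g:[a;b]\to\mathbb{R}$ with no common points of discontinuity such that $f$ has finite $p$-variation and $g$ has finite $q$-variation on $[a;b]$, the Riemann–Stieltjes integral $\int_a^b f\,\mathrm{d}g$ exists and \[ \left|\int_a^b f\,\mathrm{d}g-f(a)\left[g(b)-g(a)\right]\right|\le C_{p,q}\,\|f\|_{p\text{-var},[a;b]}^{\,p-p/q}\,\|f\|_{\mathrm{osc},[a;b]}^{\,1+p/q-p}\,\|g\|_{q\text{-var},[a;b]}. \]
   Context: For $r>0$ the $r$-variation of $h:[a;b]\to\mathbb{R}$ is $V^{r}(h,[a;b])=\sup_n\sup_{a\le t_1<\dots<t_n\le b}\sum_{i=2}^{n}|h(t_i)-h(t_{i-1})|^{r}$, and $\|h\|_{r\text{-var},[a;b]}:=(V^{r}(h,[a;b]))^{1/r}$. Also $\|h\|_{\mathrm{osc},[a;b]}:=\sup_{a\le s<t\le b}|h(t)-h(s)|$. The Riemann–Stieltjes integral $\int_a^b f\,\mathrm{d}g$ exists if the sums $\sum_i f(\nu_i)[g(a_i)-g(a_{i-1})]$ over partitions $a=a_0<\dots<a_l=b$ with tags $\nu_i\in[a_{i-1};a_i]$ converge to a common limit as the mesh tends to $0$, independently of the tags. *)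

From Stdlib Require Import Reals Lra.
From Coquelicot Require Import Coquelicot.
Open Scope R_scope.

(* x^y for x >= 0 with the convention 0^y = 0 (used only with y > 0). *)
Definition rpow (x y : R) : R := if Rlt_dec 0 x then Rpower x y else 0.

Fixpoint sumR (n : nat) (F : nat -> R) : R :=
  match n with O => 0 | S k => sumR k F + F k end.

(* Sums sum_{i=2}^{n} |h(t_i)-h(t_{i-1})|^r over a <= t_1 < ... < t_n <= b
   (points indexed here as t 0 < ... < t n, i.e. n steps). *)
Definition rvar_sums (r : R) (h : R -> R) (a b : R) (s : R) : Prop :=
  exists (n : nat) (t : nat -> R),
    a <= t O /\ t n <= b /\ (forall i, (i < n)%nat -> t i < t (S i)) /\
    s = sumR n (fun i => rpow (Rabs (h (t (S i)) - h (t i))) r).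

Definition rvar (r : R) (h : R -> R) (a b : R) : Rbar := Lub_Rbar (rvar_sums r h a b).

Definition finite_rvar (r : R) (h : R -> R) (a b : R) : Prop := is_finite (rvar r h a b).

Definition rvar_norm (r : R) (h : R -> R) (a b : R) : R := rpow (real (rvar r h a b)) (/ r).

Definition osc_norm (h : R -> R) (a b : R) : R :=
  real (Lub_Rbar (fun d => exists s t, a <= s /\ s < t /\ t <= b /\ d = Rabs (h t - h s))).

Definition cont_in (h : R -> R) (a b x : R) : Prop :=
  forall eps, 0 < eps -> exists delta, 0 < delta /\
    forall y, a <= y <= b -> Rabs (y - x) < delta -> Rabs (h y - h x) < eps.

Definition is_RS_integral (f g : R -> R) (a b I : R) : Prop :=
  forall eps, 0 < eps -> exists delta, 0 < delta /\
    forall (l : nat) (x nu : nat -> R),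
      x O = a -> x l = b ->
      (forall i, (i < l)%nat -> x i < x (S i)) ->
      (forall i, (i < l)%nat -> x i <= nu i <= x (S i)) ->
      (forall i, (i < l)%nat -> x (S i) - x i < delta) ->
      Rabs (sumR l (fun i => f (nu i) * (g (x (S i)) - g (x i))) - I) < eps.

From Stdlib Require Import Reals Lra Lia ZArith Classical ClassicalEpsilon.
From Coquelicot Require Import Coquelicot.
Open Scope R_scope.

(* Removing an interior point t_i from a partition changes the left Riemann-Stieltjes sum
   by (f t_i - f t_(i-1)) (g t_(i+1) - g t_i).  If k removable points remain, averaging the
   p-th powers of the increments of f against A = V^p(f) and the q-th powers of those of g
   against B = V^q(g) gives a point where the two increments are at most (2A/k)^(1/p) and
   (2B/k)^(1/q); the f-increment is also at most the oscillation of f.  Removing such points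
   one at a time (Loeve's greedy argument) until only a and b remain costs at most
   sum_k min(osc f, (2A/k)^(1/p)) (2B/k)^(1/q), a convergent series since 1/p + 1/q > 1,
   which splitting at the crossing point of the minimum bounds by a constant times
   osc^(1 + p/q - p) A^(1 - 1/q) B^(1/q).
   The same removal, keeping the points of a coarser partition, bounds the difference of the
   left sums of a partition and of a refinement; there each cost is also at most the product
   of the oscillations of f and g on one coarse interval, which is uniformly small for small
   mesh because f and g have no common discontinuity.  Hence the tagged sums are Cauchy as
   the mesh tends to 0, and their limit, the integral, inherits the bound. *)

Lemma sumR_ext n F G : (forall i, (i < n)%nat -> F i = G i) -> sumR n F = sumR n G.
Proof.
  induction n as [|n IH]; intros H; simpl; auto.
  rewrite IH, H; [reflexivity | lia | intros; apply H; lia].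
Qed.

Lemma sumR_le n F G : (forall i, (i < n)%nat -> F i <= G i) -> sumR n F <= sumR n G.
Proof.
  induction n as [|n IH]; intros H; simpl; [lra|].
  assert (sumR n F <= sumR n G) by (apply IH; intros; apply H; lia).
  assert (F n <= G n) by (apply H; lia). lra.
Qed.

Lemma sumR_plus n F G : sumR n (fun i => F i + G i) = sumR n F + sumR n G.
Proof. induction n; simpl; lra. Qed.

Lemma sumR_minus n F G : sumR n (fun i => F i - G i) = sumR n F - sumR n G.
Proof. induction n; simpl; lra. Qed.

Lemma sumR_scal n c F : sumR n (fun i => c * F i) = c * sumR n F.
Proof. induction n as [|n IH]; simpl; [ring|]. rewrite IH; ring. Qed.

Lemma sumR_const n c : sumR n (fun _ => c) = INR n * c.
Proof. induction n as [|n IH]; simpl sumR; [simpl; ring|]. rewrite IH, S_INR; ring. Qed.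

Lemma sumR_ge0 n F : (forall i, (i < n)%nat -> 0 <= F i) -> 0 <= sumR n F.
Proof.
  intros H. rewrite <- (Rmult_0_r (INR n)), <- sumR_const. now apply sumR_le.
Qed.

Lemma sumR_gt0 n F : (forall i, (i < n)%nat -> 0 <= F i) ->
  (exists i, (i < n)%nat /\ 0 < F i) -> 0 < sumR n F.
Proof.
  induction n as [|n IH]; intros H [i [Hi Fi]]; [lia|]. simpl.
  assert (0 <= F n) by (apply H; lia).
  destruct (Nat.eq_dec i n) as [->|Hin].
  - assert (0 <= sumR n F) by (apply sumR_ge0; intros; apply H; lia). lra.
  - assert (0 < sumR n F) by (apply IH; [intros; apply H; lia | exists i; split; [lia|auto]]). lra.
Qed.

Lemma sumR_add n k F : sumR (n + k) F = sumR n F + sumR k (fun i => F (n + i)%nat).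
Proof.
  induction k as [|k IH]; simpl; [rewrite Nat.add_0_r; ring|].
  rewrite Nat.add_succ_r; simpl. rewrite IH; ring.
Qed.

Lemma sumR_shift n F : sumR (S n) F = F O + sumR n (fun i => F (S i)).
Proof. induction n as [|n IH]; simpl in *; [ring|]. rewrite IH; ring. Qed.

Lemma Rabs_sumR n F : Rabs (sumR n F) <= sumR n (fun i => Rabs (F i)).
Proof.
  induction n as [|n IH]; simpl; [rewrite Rabs_R0; lra|].
  eapply Rle_trans; [apply Rabs_triang | lra].
Qed.

Lemma sumR_le_len n n' F : (forall i, 0 <= F i) -> (n <= n')%nat -> sumR n F <= sumR n' F.
Proof.
  intros H Hn. replace n' with (n + (n' - n))%nat by lia. rewrite sumR_add.
  assert (0 <= sumR (n' - n) (fun i => F (n + i)%nat)) by (apply sumR_ge0; auto). lra.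
Qed.

Lemma sumR_remove n i F : (i <= n)%nat ->
  sumR (S n) F = sumR n (fun j => F (if Nat.ltb j i then j else S j)) + F i.
Proof.
  intros Hi. replace (S n) with (i + S (n - i))%nat by lia.
  replace n with (i + (n - i))%nat at 2 by lia. rewrite !sumR_add, sumR_shift, Nat.add_0_r.
  rewrite (sumR_ext i (fun j => F (if Nat.ltb j i then j else S j)) F).
  2:{ intros j Hj. destruct (Nat.ltb_spec j i); [auto | lia]. }
  rewrite (sumR_ext (n - i) (fun j => F (if Nat.ltb (i + j) i then (i + j)%nat else S (i + j)))
             (fun j => F (i + S j)%nat)); [ring|].
  intros j _. destruct (Nat.ltb_spec (i + j) i); [lia | f_equal; lia].
Qed.

Lemma sumR_term_le n F j : (forall i, (i < n)%nat -> 0 <= F i) -> (j < n)%nat -> F j <= sumR n F.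
Proof.
  intros H Hj. destruct n as [|n]; [lia|]. rewrite (sumR_remove n j) by lia.
  assert (0 <= sumR n (fun k => F (if Nat.ltb k j then k else S k))); [|lra].
  apply sumR_ge0. intros k Hk. apply H. destruct (Nat.ltb_spec k j); lia.
Qed.

Lemma INR_S_gt0 i : 0 < INR (S i).
Proof. apply lt_0_INR; lia. Qed.

Lemma ceil_nat x : 0 <= x -> exists K : nat, x <= INR K <= x + 1.
Proof.
  intros Hx. destruct (archimed x) as [H1 H2]. exists (Z.to_nat (up x)).
  assert (0 <= up x)%Z by (apply le_IZR; lra).
  rewrite INR_IZR_INZ, Z2Nat.id by auto. lra.
Qed.

Lemma rpow_ge0 x y : 0 <= rpow x y.
Proof. unfold rpow. destruct (Rlt_dec 0 x); [left; apply exp_pos | lra]. Qed.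

Lemma rpow_Rpower x y : 0 < x -> rpow x y = Rpower x y.
Proof. unfold rpow. destruct (Rlt_dec 0 x); [auto | lra]. Qed.

Lemma rpow_gt0 x y : 0 < x -> 0 < rpow x y.
Proof. intros; rewrite rpow_Rpower by auto. apply exp_pos. Qed.

Lemma rpow0l y : rpow 0 y = 0.
Proof. unfold rpow. destruct (Rlt_dec 0 0); lra. Qed.

Lemma rpow1l e : rpow 1 e = 1.
Proof. rewrite rpow_Rpower by lra. unfold Rpower. rewrite ln_1, Rmult_0_r; apply exp_0. Qed.

Lemma rpow_x1 x : 0 <= x -> rpow x 1 = x.
Proof.
  intros Hx. destruct (Req_dec x 0) as [->|]; [apply rpow0l|].
  rewrite rpow_Rpower by lra; apply Rpower_1; lra.
Qed.

Lemma rpow_le x y e : 0 <= x <= y -> 0 < e -> rpow x e <= rpow y e.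
Proof.
  intros [H0 H1] He. destruct (Req_dec x 0) as [->|]; [rewrite rpow0l; apply rpow_ge0|].
  rewrite !rpow_Rpower by lra. apply Rle_Rpower_l; lra.
Qed.

Lemma rpow_mult x y e : 0 <= x -> 0 <= y -> rpow (x * y) e = rpow x e * rpow y e.
Proof.
  intros Hx Hy. destruct (Req_dec x 0) as [->|]; [rewrite Rmult_0_l, !rpow0l; ring|].
  destruct (Req_dec y 0) as [->|]; [rewrite Rmult_0_r, !rpow0l; ring|].
  rewrite !rpow_Rpower by (try apply Rmult_lt_0_compat; lra).
  rewrite Rpower_mult_distr; lra.
Qed.

Lemma rpow_rpow x a b : 0 <= x -> rpow (rpow x a) b = rpow x (a * b).
Proof.
  intros Hx. destruct (Req_dec x 0) as [->|]; [rewrite !rpow0l; auto|].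
  rewrite (rpow_Rpower x a), rpow_Rpower, Rpower_mult, rpow_Rpower by (try apply exp_pos; lra).
  reflexivity.
Qed.

Lemma rpow_plus x a b : 0 < x -> rpow x (a + b) = rpow x a * rpow x b.
Proof. intros; rewrite !rpow_Rpower by auto; apply Rpower_plus. Qed.

Lemma rpow_opp x e : 0 < x -> rpow x (- e) = / rpow x e.
Proof. intros. rewrite !rpow_Rpower by auto. unfold Rpower. rewrite <- exp_Ropp. f_equal; ring. Qed.

Lemma rpow_div x y e : 0 <= x -> 0 < y -> rpow (x / y) e = rpow x e / rpow y e.
Proof.
  intros Hx Hy. unfold Rdiv. rewrite rpow_mult by (try apply Rlt_le, Rinv_0_lt_compat; lra).
  f_equal. rewrite !rpow_Rpower by (try apply Rinv_0_lt_compat; lra).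
  unfold Rpower. rewrite ln_Rinv, <- exp_Ropp by lra. f_equal; ring.
Qed.

Lemma rpow_opp_le x y e : 0 < x <= y -> 0 < e -> rpow y (- e) <= rpow x (- e).
Proof.
  intros Hxy He. rewrite !rpow_opp by lra. apply Rinv_le_contravar; [apply rpow_gt0; lra|].
  apply rpow_le; lra.
Qed.

Lemma le_rpow_inv x X e : 0 <= x -> 0 < e -> rpow x e <= X -> x <= rpow X (/ e).
Proof.
  intros Hx He H. rewrite <- (rpow_x1 x), <- (Rinv_r e), <- rpow_rpow by lra.
  apply rpow_le; [split; [apply rpow_ge0 | auto] | apply Rinv_0_lt_compat; auto].
Qed.

Lemma rpow_le_of_le_rpow_inv x X e : 0 <= x -> 0 <= X -> 0 < e -> x <= rpow X (/ e) -> rpow x e <= X.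
Proof.
  intros Hx HX He H. apply Rle_trans with (rpow (rpow X (/ e)) e); [apply rpow_le; auto; lra|].
  rewrite rpow_rpow, Rinv_l, rpow_x1 by lra. lra.
Qed.

(** * Sums of powers *)

Lemma rpow_mvt x y e : 0 < x < y ->
  exists c, x < c < y /\ rpow y e - rpow x e = e * rpow c (e - 1) * (y - x).
Proof.
  intros [Hx Hxy].
  destruct (MVT_cor2 (fun z => Rpower z e) (fun z => e * Rpower z (e - 1)) x y Hxy)
    as [c [Hc1 Hc2]]; [intros c Hc; apply derivable_pt_lim_power; lra|].
  exists c; split; auto. rewrite !rpow_Rpower by lra. rewrite Hc1; ring.
Qed.

Lemma rpow_step_lt1 g x : 0 < g < 1 -> 0 < x ->
  (1 - g) * rpow (x + 1) (- g) <= rpow (x + 1) (1 - g) - rpow x (1 - g).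
Proof.
  intros Hg Hx. destruct (rpow_mvt x (x + 1) (1 - g)) as [c [Hc ->]]; [lra|].
  replace (1 - g - 1) with (- g) by ring. rewrite Rplus_minus_l, Rmult_1_r.
  apply Rmult_le_compat_l; [lra|]. apply rpow_opp_le; lra.
Qed.

Lemma rpow_step_gt1 s x : 1 < s -> 0 < x ->
  (s - 1) * rpow (x + 1) (- s) <= rpow x (1 - s) - rpow (x + 1) (1 - s).
Proof.
  intros Hs Hx. destruct (rpow_mvt x (x + 1) (1 - s)) as [c [Hc Heq]]; [lra|].
  replace (rpow x (1 - s) - rpow (x + 1) (1 - s)) with ((s - 1) * rpow c (- s)).
  - apply Rmult_le_compat_l; [lra|]. apply rpow_opp_le; lra.
  - replace (1 - s - 1) with (- s) in Heq by ring. rewrite Rplus_minus_l in Heq. lra.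
Qed.

Lemma sumR_rpow_lt1 g K : 0 < g < 1 ->
  sumR K (fun i => rpow (INR (S i)) (- g)) <= rpow (INR K) (1 - g) / (1 - g).
Proof.
  intros Hg. induction K as [|K IH]; cbn [sumR]; [rewrite rpow0l; unfold Rdiv; lra|].
  destruct K as [|K].
  - simpl. rewrite !rpow1l. apply Rmult_le_reg_r with (1 - g); [lra|]. field_simplify; lra.
  - assert (H := rpow_step_lt1 g (INR (S K)) Hg (INR_S_gt0 K)).
    rewrite <- S_INR in H. apply Rmult_le_reg_r with (1 - g); [lra|].
    unfold Rdiv in *. rewrite Rmult_plus_distr_r, Rmult_assoc, Rinv_l by lra.
    apply Rmult_le_compat_r with (r := 1 - g) in IH; [|lra].
    rewrite Rmult_assoc, Rinv_l in IH by lra. lra.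
Qed.

Lemma sumR_rpow_tail s K N : 1 < s -> (1 <= K)%nat ->
  sumR N (fun i => rpow (INR (K + S i)) (- s))
  <= (rpow (INR K) (1 - s) - rpow (INR (K + N)) (1 - s)) / (s - 1).
Proof.
  intros Hs HK. induction N as [|N IH]; cbn [sumR]; [rewrite Nat.add_0_r; unfold Rdiv; lra|].
  assert (H := rpow_step_gt1 s (INR (K + N)) Hs ltac:(apply lt_0_INR; lia)).
  rewrite <- S_INR, <- Nat.add_succ_r in H. apply Rmult_le_reg_r with (s - 1); [lra|].
  unfold Rdiv in *. rewrite Rmult_plus_distr_r, Rmult_assoc, Rinv_l by lra.
  apply Rmult_le_compat_r with (r := s - 1) in IH; [|lra].
  rewrite Rmult_assoc, Rinv_l in IH by lra. lra.
Qed.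

Lemma sumR_rpow_gt1 s N : 1 < s -> sumR N (fun i => rpow (INR (S i)) (- s)) <= s / (s - 1).
Proof.
  intros Hs. destruct N as [|N]; [simpl; apply Rlt_le, Rdiv_lt_0_compat; lra|].
  rewrite sumR_shift. simpl (INR 1). rewrite rpow1l.
  assert (H := sumR_rpow_tail s 1 N Hs (le_n 1)). simpl (INR 1) in H. rewrite rpow1l in H.
  assert (0 <= rpow (INR (1 + N)) (1 - s)) by apply rpow_ge0.
  apply Rle_trans with (1 + 1 / (s - 1)); [|apply Req_le; field; lra].
  apply Rplus_le_compat_l. eapply Rle_trans; [apply H|].
  unfold Rdiv. apply Rmult_le_compat_r; [apply Rlt_le, Rinv_0_lt_compat|]; lra.
Qed.

Lemma Rmin_le_interp x y th : 0 <= x -> 0 <= y -> 0 < th < 1 ->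
  Rmin x y <= rpow x (1 - th) * rpow y th.
Proof.
  intros Hx Hy Hth.
  destruct (Req_dec x 0) as [->|]; [rewrite Rmin_left, rpow0l by auto; lra|].
  destruct (Req_dec y 0) as [->|]; [rewrite Rmin_right, rpow0l by auto; lra|].
  destruct (Rle_lt_dec x y).
  - rewrite Rmin_left, <- (rpow_x1 x) at 1 by lra.
    replace 1 with ((1 - th) + th) at 1 by ring. rewrite rpow_plus by lra.
    apply Rmult_le_compat_l; [apply rpow_ge0 | apply rpow_le; lra].
  - rewrite Rmin_right, <- (rpow_x1 y) at 1 by lra.
    replace 1 with ((1 - th) + th) at 1 by ring. rewrite rpow_plus by lra.
    apply Rmult_le_compat_r; [apply rpow_ge0 | apply rpow_le; lra].
Qed.

Lemma Rinv_in_01 p : 1 < p -> 0 < / p < 1.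
Proof.
  intros Hp. split; [apply Rinv_0_lt_compat; lra|].
  rewrite <- Rinv_1. apply Rinv_lt_contravar; lra.
Qed.

Lemma rpow_ratio_split O X a : 0 < O -> 0 < X ->
  O * rpow (X / O) a = rpow O (1 - a) * rpow X a.
Proof.
  intros HO HX. rewrite rpow_div by lra. unfold Rminus.
  rewrite rpow_plus, rpow_opp, rpow_x1 by lra.
  field. apply Rgt_not_eq, rpow_gt0; auto.
Qed.

Definition young_term p q O X Y k :=
  Rmin O (X * rpow (INR k) (- / p)) * (Y * rpow (INR k) (- / q)).

Lemma sumR_young_term_head p q O X Y K : 1 < q -> 0 <= O -> 0 <= Y ->
  sumR K (fun i => young_term p q O X Y (S i))
  <= O * Y * (rpow (INR K) (1 - / q) / (1 - / q)).
Proof.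
  intros Hq HO HY. eapply Rle_trans; [|apply Rmult_le_compat_l;
    [apply Rmult_le_pos; auto | apply sumR_rpow_lt1, Rinv_in_01; auto]].
  rewrite <- sumR_scal. apply sumR_le. intros i _. unfold young_term.
  rewrite <- Rmult_assoc. apply Rmult_le_compat_r; [apply rpow_ge0|].
  apply Rmult_le_compat_r; [auto | apply Rmin_l].
Qed.

Lemma sumR_young_term_tail p q O X Y K N : 1 < / p + / q -> (1 <= K)%nat -> 0 <= X -> 0 <= Y ->
  sumR N (fun i => young_term p q O X Y (K + S i))
  <= X * Y * (rpow (INR K) (1 - (/ p + / q)) / (/ p + / q - 1)).
Proof.
  intros Hs HK HX HY. set (s := / p + / q). assert (Hs1 : 1 < s) by (unfold s; lra).
  apply Rle_trans with (X * Y * sumR N (fun i => rpow (INR (K + S i)) (- s))).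
  - rewrite <- sumR_scal. apply sumR_le. intros i _. unfold young_term, s.
    rewrite Ropp_plus_distr, rpow_plus by (apply lt_0_INR; lia).
    replace (X * Y * (rpow (INR (K + S i)) (- / p) * rpow (INR (K + S i)) (- / q)))
      with (X * rpow (INR (K + S i)) (- / p) * (Y * rpow (INR (K + S i)) (- / q))) by ring.
    apply Rmult_le_compat_r; [apply Rmult_le_pos; [lra | apply rpow_ge0] | apply Rmin_r].
  - apply Rmult_le_compat_l; [apply Rmult_le_pos; lra|].
    eapply Rle_trans; [apply sumR_rpow_tail; auto|]. unfold Rdiv.
    apply Rmult_le_compat_r; [apply Rlt_le, Rinv_0_lt_compat; lra|].
    pose proof (rpow_ge0 (INR (K + N)) (1 - s)). lra.
Qed.

Definition young_const p q := rpow 2 (1 - / q) / (1 - / q) + / (/ p + / q - 1).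

Lemma young_head_le p q O X Y K : 0 < p -> 1 < q -> 0 < O <= X -> 0 <= Y ->
  INR K <= 2 * rpow (X / O) p ->
  O * Y * (rpow (INR K) (1 - / q) / (1 - / q))
  <= rpow 2 (1 - / q) / (1 - / q) * (O * rpow (X / O) (p * (1 - / q)) * Y).
Proof.
  intros Hp Hq HOX HY HK. set (e := 1 - / q).
  assert (He : 0 < e) by (pose proof (Rinv_in_01 q Hq); unfold e; lra).
  assert (Hu : 0 <= X / O) by (apply Rlt_le, Rdiv_lt_0_compat; lra).
  assert (rpow (INR K) e <= rpow 2 e * rpow (X / O) (p * e)).
  { rewrite <- rpow_rpow, <- rpow_mult by (try apply rpow_ge0; lra).
    apply rpow_le; [split; [apply pos_INR | auto] | auto]. }
  replace (O * Y * (rpow (INR K) e / e)) with (O * Y / e * rpow (INR K) e) by (field; lra).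
  replace (rpow 2 e / e * (O * rpow (X / O) (p * e) * Y))
    with (O * Y / e * (rpow 2 e * rpow (X / O) (p * e))) by (field; lra).
  apply Rmult_le_compat_l; [|auto].
  unfold Rdiv. apply Rmult_le_pos; [nra | apply Rlt_le, Rinv_0_lt_compat; lra].
Qed.

Lemma young_tail_le p q O X Y K : 1 < p -> 1 < q -> 1 < / p + / q -> 0 < O <= X -> 0 <= Y ->
  1 <= rpow (X / O) p <= INR K ->
  X * Y * (rpow (INR K) (1 - (/ p + / q)) / (/ p + / q - 1))
  <= / (/ p + / q - 1) * (O * rpow (X / O) (p * (1 - / q)) * Y).
Proof.
  intros Hp Hq Hs HOX HY HK. set (s := / p + / q). assert (Hs1 : 1 < s) by (unfold s; lra).
  set (u := X / O) in *. assert (Hu : 0 < u) by (apply Rdiv_lt_0_compat; lra).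
  assert (rpow (INR K) (1 - s) <= rpow (rpow u p) (1 - s))
    by (replace (1 - s) with (- (s - 1)) by ring; apply rpow_opp_le; lra).
  assert (Hx1 : X * rpow (rpow u p) (1 - s) = O * rpow u (p * (1 - / q))).
  { rewrite rpow_rpow by lra. replace X with (O * u) at 1 by (unfold u; field; lra).
    rewrite Rmult_assoc, <- (rpow_x1 u) at 1 by lra. rewrite <- rpow_plus by lra.
    do 2 f_equal. unfold s. field. lra. }
  apply Rle_trans with (X * Y * rpow (rpow u p) (1 - s) / (s - 1)).
  - unfold Rdiv. rewrite <- Rmult_assoc. apply Rmult_le_compat_r.
    { apply Rlt_le, Rinv_0_lt_compat; lra. }
    apply Rmult_le_compat_l; [apply Rmult_le_pos|]; lra.
  - apply Req_le. rewrite <- Hx1. field. lra.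
Qed.

(* Split the sum at [K ~ (X/O)^p], where the two terms of the minimum cross. *)
Lemma sumR_young_term_le p q O X Y N : 1 < p -> 1 < q -> 1 < / p + / q ->
  0 <= O <= X -> 0 <= Y ->
  sumR N (fun i => young_term p q O X Y (S i))
  <= young_const p q * (rpow O (1 - p * (1 - / q)) * rpow X (p * (1 - / q)) * Y).
Proof.
  intros Hp Hq Hs [HO0 HOX] HY. unfold young_const.
  assert (HT : forall k, 0 <= young_term p q O X Y k).
  { intros k. unfold young_term. apply Rmult_le_pos.
    - apply Rmin_glb; [lra | apply Rmult_le_pos; [lra | apply rpow_ge0]].
    - apply Rmult_le_pos; [lra | apply rpow_ge0]. }
  destruct (Req_dec O 0) as [->|HO].
  { replace (sumR N _) with (INR N * 0).
    - rewrite rpow0l. apply Req_le. ring.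
    - rewrite <- sumR_const. apply sumR_ext. intros i _. unfold young_term.
      rewrite Rmin_left; [ring|]. apply Rmult_le_pos; [lra | apply rpow_ge0]. }
  assert (Hx : 1 <= rpow (X / O) p).
  { rewrite <- (rpow1l p). apply rpow_le; [split; [lra|] | lra].
    apply Rmult_le_reg_r with O; [lra|]. unfold Rdiv. rewrite Rmult_assoc, Rinv_l; lra. }
  destruct (ceil_nat (rpow (X / O) p)) as [K [HK1 HK2]]; [lra|].
  assert (HK : (1 <= K)%nat) by (destruct K; [simpl in HK1; lra | lia]).
  rewrite <- rpow_ratio_split by lra.
  apply Rle_trans with (sumR (K + N) (fun i => young_term p q O X Y (S i)));
    [apply sumR_le_len; auto; lia|].
  rewrite sumR_add, (sumR_ext N _ (fun i => young_term p q O X Y (K + S i)))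
    by (intros; f_equal; lia).
  pose proof (sumR_young_term_head p q O X Y K Hq HO0 HY).
  pose proof (young_head_le p q O X Y K ltac:(lra) Hq ltac:(lra) HY ltac:(lra)).
  pose proof (sumR_young_term_tail p q O X Y K N Hs HK ltac:(lra) HY).
  pose proof (young_tail_le p q O X Y K Hp Hq Hs ltac:(lra) HY ltac:(lra)).
  lra.
Qed.

(* Interpolating [Rmin eta (Z * k ^ (- s))] with weight [th = (1 + s) / (2 s)] leaves the
   summable decay [k ^ (- (1 + s) / 2)] and a factor [eta ^ (1 - th)] that vanishes with [eta]. *)
Definition decay_bound eta Z s :=
  let th := (1 + s) / (2 * s) in
  rpow eta (1 - th) * rpow Z th * ((1 + s) / 2 / ((1 + s) / 2 - 1)).

Lemma sumR_min_eta_le eta Z s K : 0 <= eta -> 0 <= Z -> 1 < s ->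
  sumR K (fun i => Rmin eta (Z * rpow (INR (S i)) (- s))) <= decay_bound eta Z s.
Proof.
  intros He HZ Hs. unfold decay_bound.
  set (th := (1 + s) / (2 * s)). set (sg := (1 + s) / 2).
  assert (Hth : 0 < th < 1).
  { unfold th. split; [apply Rdiv_lt_0_compat; lra|].
    apply Rmult_lt_reg_r with (2 * s); [lra|]. unfold Rdiv. rewrite Rmult_assoc, Rinv_l; lra. }
  apply Rle_trans with
    (sumR K (fun i => rpow eta (1 - th) * rpow Z th * rpow (INR (S i)) (- sg))).
  - apply sumR_le. intros i _. eapply Rle_trans.
    { apply (Rmin_le_interp _ _ th); auto. apply Rmult_le_pos; [auto | apply rpow_ge0]. }
    rewrite rpow_mult, rpow_rpow by (auto; try apply rpow_ge0; left; apply INR_S_gt0).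
    replace (- s * th) with (- sg) by (unfold sg, th; field; lra). apply Req_le; ring.
  - rewrite sumR_scal. apply Rmult_le_compat_l; [apply Rmult_le_pos; apply rpow_ge0|].
    apply sumR_rpow_gt1. unfold sg; lra.
Qed.

Lemma decay_bound_small Z s eps : 0 <= Z -> 1 < s -> 0 < eps ->
  exists eta, 0 < eta /\ decay_bound eta Z s < eps.
Proof.
  intros HZ Hs He. unfold decay_bound.
  set (th := (1 + s) / (2 * s)). set (sg := (1 + s) / 2).
  assert (Hth : 0 < th < 1).
  { unfold th. split; [apply Rdiv_lt_0_compat; lra|].
    apply Rmult_lt_reg_r with (2 * s); [lra|]. unfold Rdiv. rewrite Rmult_assoc, Rinv_l; lra. }
  set (W := rpow Z th * (sg / (sg - 1))).
  assert (HW : 0 <= W).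
  { unfold W. apply Rmult_le_pos; [apply rpow_ge0 | unfold sg; apply Rlt_le, Rdiv_lt_0_compat; lra]. }
  set (c := eps / (W + 1)). assert (Hc : 0 < c) by (unfold c; apply Rdiv_lt_0_compat; lra).
  exists (rpow c (/ (1 - th))). split; [apply rpow_gt0; auto|].
  rewrite rpow_rpow, Rinv_l, rpow_x1 by lra.
  replace (c * rpow Z th * (sg / (sg - 1))) with (c * W) by (unfold W; ring).
  unfold c. apply Rmult_lt_reg_r with (W + 1); [lra|].
  unfold Rdiv. replace (eps * / (W + 1) * W * (W + 1)) with (eps * W) by (field; lra). nra.
Qed.

(** * Greedy selection *)

Definition unmarked N (mark : nat -> bool) := sumR N (fun j => if mark j then 0 else 1).

Lemma unmarked_INR N mark : exists K, unmarked N mark = INR K.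
Proof.
  induction N as [|N [K HK]]; [exists O; reflexivity|]. unfold unmarked in *. cbn [sumR].
  rewrite HK. destruct (mark N); [exists K; ring | exists (S K); rewrite S_INR; ring].
Qed.

Lemma unmarked_gt0 N mark : 0 < unmarked N mark -> exists j, (j < N)%nat /\ mark j = false.
Proof.
  intros H. apply NNPP. intros Hn. enough (unmarked N mark = 0) by lra.
  rewrite <- (Rmult_0_r (INR N)), <- sumR_const. apply sumR_ext. intros j Hj.
  destruct (mark j) eqn:E; auto. exfalso; apply Hn; eauto.
Qed.

Lemma sumR_mark_one N mark F j : (j < N)%nat -> mark j = false ->
  sumR N (fun i => if mark i then 0 else F i)
  = sumR N (fun i => if (Nat.eqb i j || mark i)%bool then 0 else F i) + F j.
Proof.
  induction N as [|N IH]; intros Hj Hm; [lia|]. cbn [sumR].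
  destruct (Nat.eq_dec j N) as [->|Hne].
  - rewrite Nat.eqb_refl, Hm. cbn [orb].
    assert (E : sumR N (fun i => if (Nat.eqb i N || mark i)%bool then 0 else F i)
                = sumR N (fun i => if mark i then 0 else F i)).
    { apply sumR_ext. intros i Hi. destruct (Nat.eqb_spec i N); [lia | reflexivity]. }
    rewrite E. ring.
  - rewrite IH by (auto; lia). destruct (Nat.eqb_spec N j); [lia|]. cbn [orb]. ring.
Qed.

Lemma exists_unmarked_le N w mark W k : (forall j, (j < N)%nat -> 0 <= w j) ->
  sumR N w <= W -> 0 < k -> k <= unmarked N mark ->
  exists j, (j < N)%nat /\ mark j = false /\ k * w j <= W.
Proof.
  intros Hw Hs Hk Hc. apply NNPP. intros Hn.
  assert (Hall : forall j, (j < N)%nat -> mark j = false -> W < k * w j).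
  { intros j Hj Hb. apply Rnot_le_lt. intros Hle. apply Hn. eauto. }
  destruct (unmarked_gt0 N mark ltac:(lra)) as [j0 [Hj0 Hm0]].
  assert (HW : 0 <= W) by (apply Rle_trans with (sumR N w); [apply sumR_ge0 | ]; auto).
  assert (Hpos : 0 < sumR N (fun j => if mark j then 0 else k * w j - W)).
  { apply sumR_gt0.
    - intros j Hj. destruct (mark j) eqn:E; [lra | specialize (Hall j Hj E); lra].
    - exists j0. split; auto. rewrite Hm0. specialize (Hall j0 Hj0 Hm0). lra. }
  rewrite (sumR_ext N _ (fun j => k * (if mark j then 0 else w j) - W * (if mark j then 0 else 1)))
    in Hpos by (intros j _; destruct (mark j); ring).
  rewrite sumR_minus, !sumR_scal in Hpos. fold (unmarked N mark) in Hpos.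
  assert (sumR N (fun j => if mark j then 0 else w j) <= sumR N w)
    by (apply sumR_le; intros j Hj; destruct (mark j); [apply Hw; auto | lra]).
  assert (k * sumR N (fun j => if mark j then 0 else w j) <= k * W)
    by (apply Rmult_le_compat_l; lra).
  assert (W * k <= W * unmarked N mark) by (apply Rmult_le_compat_l; lra).
  lra.
Qed.

Lemma Rinv_ge0 A : 0 <= A -> 0 <= / A.
Proof.
  intros HA. destruct (Req_dec A 0) as [->|]; [rewrite Rinv_0; lra|].
  apply Rlt_le, Rinv_0_lt_compat; lra.
Qed.

Lemma Rinv_mult_le_1 x A : 0 <= x <= A -> / A * x <= 1.
Proof.
  intros Hx. destruct (Req_dec A 0) as [->|HA]; [rewrite Rinv_0; lra|].
  apply Rmult_le_reg_l with A; [lra|]. rewrite <- Rmult_assoc, Rinv_r; lra.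
Qed.

Lemma le_of_Rinv_mult_le x A c : 0 <= x <= A -> / A * x <= c -> x <= c * A.
Proof.
  intros Hx H. destruct (Req_dec A 0) as [->|HA]; [lra|].
  replace x with (/ A * x * A) by (field; auto). apply Rmult_le_compat_r; lra.
Qed.

(* Average the weights [u j / A + v j / B]; since [/ 0 = 0], a vanishing [A] or [B] is harmless. *)
Lemma exists_unmarked_pair N u v mark A B k :
  (forall j, (j < N)%nat -> 0 <= u j /\ 0 <= v j) -> sumR N u <= A -> sumR N v <= B ->
  (1 <= k)%nat -> INR k <= unmarked N mark ->
  exists j, (j < N)%nat /\ mark j = false /\ u j <= 2 * A / INR k /\ v j <= 2 * B / INR k.
Proof.
  intros Huv Hu Hv Hk Hc. assert (HkR : 0 < INR k) by (apply lt_0_INR; lia).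
  assert (Hu0 : 0 <= sumR N u) by (apply sumR_ge0; intros; apply Huv; auto).
  assert (Hv0 : 0 <= sumR N v) by (apply sumR_ge0; intros; apply Huv; auto).
  assert (HuA : forall j, (j < N)%nat -> 0 <= u j <= A).
  { intros j Hj. split; [apply Huv; auto|]. eapply Rle_trans; [|apply Hu].
    apply sumR_term_le; auto. intros i Hi; apply Huv; auto. }
  assert (HvB : forall j, (j < N)%nat -> 0 <= v j <= B).
  { intros j Hj. split; [apply Huv; auto|]. eapply Rle_trans; [|apply Hv].
    apply sumR_term_le; auto. intros i Hi; apply Huv; auto. }
  destruct (exists_unmarked_le N (fun j => / A * u j + / B * v j) mark 2 (INR k))
    as [j [Hj [Hm Hw]]]; auto.
  - intros j Hj. destruct (HuA j Hj), (HvB j Hj).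
    apply Rplus_le_le_0_compat; apply Rmult_le_pos; auto; apply Rinv_ge0; lra.
  - rewrite sumR_plus, !sumR_scal.
    assert (/ A * sumR N u <= 1) by (apply Rinv_mult_le_1; lra).
    assert (/ B * sumR N v <= 1) by (apply Rinv_mult_le_1; lra). lra.
  - destruct (HuA j Hj), (HvB j Hj).
    assert (0 <= / A * u j) by (apply Rmult_le_pos; auto; apply Rinv_ge0; lra).
    assert (0 <= / B * v j) by (apply Rmult_le_pos; auto; apply Rinv_ge0; lra).
    exists j. repeat split; auto.
    + replace (2 * A / INR k) with (2 / INR k * A) by (field; lra).
      apply le_of_Rinv_mult_le; auto.
      apply Rmult_le_reg_l with (INR k); [auto|].
      replace (INR k * (2 / INR k)) with 2 by (field; lra). nra.
    + replace (2 * B / INR k) with (2 / INR k * B) by (field; lra).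
      apply le_of_Rinv_mult_le; auto.
      apply Rmult_le_reg_l with (INR k); [auto|].
      replace (INR k * (2 / INR k)) with 2 by (field; lra). nra.
Qed.

(* Induction on the number [K] of unmarked indices: mark one that is small at level [K + 1]. *)
Lemma sumR_unmarked_greedy N u v c psi A B :
  (forall j, (j < N)%nat -> 0 <= u j /\ 0 <= v j) -> sumR N u <= A -> sumR N v <= B ->
  (forall j k, (j < N)%nat -> (1 <= k)%nat -> u j <= 2 * A / INR k -> v j <= 2 * B / INR k ->
     c j <= psi k) ->
  forall K mark, unmarked N mark = INR K ->
  sumR N (fun j => if mark j then 0 else c j) <= sumR K (fun i => psi (S i)).
Proof.
  intros Huv Hu Hv Hc K. induction K as [|K IH]; intros mark HK.
  - replace (sumR N _) with (INR N * 0); [simpl; lra|].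
    rewrite <- sumR_const. apply sumR_ext. intros j Hj. destruct (mark j) eqn:E; auto.
    exfalso. assert (0 < unmarked N mark); [|simpl in HK; lra].
    apply sumR_gt0; [intros i _; destruct (mark i); lra|].
    exists j. split; auto. rewrite E. lra.
  - destruct (exists_unmarked_pair N u v mark A B (S K)) as [j [Hj [Hm [Huj Hvj]]]];
      auto; [lia | rewrite HK; lra|].
    rewrite (sumR_mark_one N mark c j) by auto. cbn [sumR].
    assert (IHK := IH (fun i => (Nat.eqb i j || mark i)%bool)).
    assert (unmarked N (fun i => (Nat.eqb i j || mark i)%bool) = INR K).
    { pose proof (sumR_mark_one N mark (fun _ => 1) j Hj Hm) as E. cbv beta in E.
      fold (unmarked N mark) in E. rewrite HK, S_INR in E. unfold unmarked. lra. }
    assert (c j <= psi (S K)) by (apply Hc; auto; lia). specialize (IHK H). lra.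
Qed.

Lemma sumR_greedy N u v c psi A B :
  (forall j, (j < N)%nat -> 0 <= u j /\ 0 <= v j) -> sumR N u <= A -> sumR N v <= B ->
  (forall j k, (j < N)%nat -> (1 <= k)%nat -> u j <= 2 * A / INR k -> v j <= 2 * B / INR k ->
     c j <= psi k) ->
  sumR N c <= sumR N (fun i => psi (S i)).
Proof.
  intros Huv Hu Hv Hc. apply (sumR_unmarked_greedy N u v c psi A B Huv Hu Hv Hc N (fun _ => false)).
  unfold unmarked. rewrite sumR_const. ring.
Qed.

(** * Partitions and refinements *)

Definition incr (t : nat -> R) n := forall i, (i < n)%nat -> t i < t (S i).

Definition tagged_sum (f g : R -> R) (x nu : nat -> R) l :=
  sumR l (fun i => f (nu i) * (g (x (S i)) - g (x i))).

Definition left_sum f g t n := tagged_sum f g t t n.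

Definition pvar_sum r (h : R -> R) (t : nat -> R) n :=
  sumR n (fun i => rpow (Rabs (h (t (S i)) - h (t i))) r).

Definition var_le r h a b A :=
  forall t n, incr t n -> a <= t O -> t n <= b -> pvar_sum r h t n <= A.

Definition remove_pt (t : nat -> R) i := fun j => if Nat.ltb j i then t j else t (S j).

Lemma incr_lt t n i j : incr t n -> (i < j)%nat -> (j <= n)%nat -> t i < t j.
Proof.
  intros H Hij Hj. induction j as [|j IH]; [lia|].
  destruct (Nat.eq_dec i j) as [->|]; [apply H; lia|].
  apply Rlt_trans with (t j); [apply IH; lia | apply H; lia].
Qed.

Lemma incr_le t n i j : incr t n -> (i <= j)%nat -> (j <= n)%nat -> t i <= t j.
Proof.
  intros H Hij Hj. destruct (Nat.eq_dec i j) as [->|]; [lra|].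
  left; apply (incr_lt t n); auto; lia.
Qed.

Lemma incr_in t n a b i : incr t n -> a <= t O -> t n <= b -> (i <= n)%nat -> a <= t i <= b.
Proof.
  intros H Ha Hb Hi. split.
  - apply Rle_trans with (t O); [auto | apply (incr_le t n); auto; lia].
  - apply Rle_trans with (t n); [apply (incr_le t n); auto; lia | auto].
Qed.

Lemma incr_remove t n i : incr t n -> (0 < i < n)%nat -> incr (remove_pt t i) (n - 1).
Proof.
  intros H Hi j Hj. unfold remove_pt.
  destruct (Nat.ltb_spec j i), (Nat.ltb_spec (S j) i);
    [apply H; lia | apply (incr_lt t n); auto; lia | lia | apply H; lia].
Qed.

Lemma left_sum_remove f g t n j : (S j < n)%nat ->
  left_sum f g t n - left_sum f g (remove_pt t (S j)) (n - 1)
  = (f (t (S j)) - f (t j)) * (g (t (S (S j))) - g (t (S j))).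
Proof.
  intros Hj. unfold left_sum, tagged_sum.
  replace n with (j + S (S (n - j - 2)))%nat at 1 by lia.
  replace (n - 1)%nat with (j + S (n - j - 2))%nat by lia.
  rewrite !sumR_add, !sumR_shift. set (k := (n - j - 2)%nat).
  rewrite (sumR_ext j (fun i => f (remove_pt t (S j) i)
             * (g (remove_pt t (S j) (S i)) - g (remove_pt t (S j) i)))
             (fun i => f (t i) * (g (t (S i)) - g (t i)))).
  2:{ intros i Hi. unfold remove_pt.
      destruct (Nat.ltb_spec i (S j)), (Nat.ltb_spec (S i) (S j)); auto; lia. }
  rewrite (sumR_ext k (fun i => f (remove_pt t (S j) (j + S i)%nat)
             * (g (remove_pt t (S j) (S (j + S i))) - g (remove_pt t (S j) (j + S i)%nat)))
             (fun i => f (t (j + S (S i))%nat) * (g (t (S (j + S (S i)))) - g (t (j + S (S i))%nat)))).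
  2:{ intros i _. unfold remove_pt.
      destruct (Nat.ltb_spec (j + S i) (S j)), (Nat.ltb_spec (S (j + S i)) (S j)); try lia.
      repeat f_equal; lia. }
  unfold remove_pt. rewrite Nat.add_0_r.
  destruct (Nat.ltb_spec j (S j)), (Nat.ltb_spec (S j) (S j)); try lia.
  replace (j + 1)%nat with (S j) by lia. ring.
Qed.

Fixpoint kept (s : nat -> nat) m i : bool :=
  match m with
  | O => Nat.eqb (s O) i
  | S m' => Nat.eqb (s m) i || kept s m' i
  end.

Lemma kept_spec s m i : kept s m i = true <-> exists j, (j <= m)%nat /\ s j = i.
Proof.
  induction m as [|m IH]; simpl.
  - rewrite Nat.eqb_eq. split; [intros; exists O; split; auto|].
    intros [j [Hj Hs]]. replace j with O in Hs by lia. auto.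
  - rewrite Bool.orb_true_iff, Nat.eqb_eq, IH. split.
    + intros [H|[j [Hj H]]]; [exists (S m) | exists j]; split; auto.
    + intros [j [Hj H]]. destruct (Nat.eq_dec j (S m)) as [->|]; auto.
      right; exists j; split; auto; lia.
Qed.

Lemma not_kept s m i : kept s m i = false -> forall j, (j <= m)%nat -> s j <> i.
Proof.
  intros H j Hj E. assert (kept s m i = true) by (apply kept_spec; eauto). congruence.
Qed.

Definition refines (t : nat -> R) n (s : nat -> nat) m (P : nat -> R) :=
  incr t n /\ (forall j, (j < m)%nat -> (s j < s (S j))%nat) /\ s O = O /\ s m = n /\
  (forall j, (j <= m)%nat -> t (s j) = P j).

Lemma index_lt s m i j : (forall j, (j < m)%nat -> (s j < s (S j))%nat) ->
  (i < j)%nat -> (j <= m)%nat -> (s i < s j)%nat.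
Proof.
  intros H Hij Hj. induction j as [|j IH]; [lia|].
  destruct (Nat.eq_dec i j) as [->|]; [apply H; lia|].
  apply Nat.lt_trans with (s j); [apply IH; lia | apply H; lia].
Qed.

Lemma refines_block t n s m P i : refines t n s m P -> (0 < i < n)%nat -> kept s m i = false ->
  exists j, (j < m)%nat /\ P j <= t (i - 1)%nat /\ t (S i) <= P (S j).
Proof.
  intros [Hinc [Hs [H0 [Hm HP]]]] Hi Hk. assert (Hne := not_kept s m i Hk).
  assert (G : forall r k, (k + r = m)%nat -> (s k < i)%nat ->
            exists j, (j < m)%nat /\ (s j < i < s (S j))%nat).
  { induction r as [|r IH]; intros k Hkr Hsk; [replace k with m in Hsk by lia; lia|].
    assert (Hne1 := Hne (S k) ltac:(lia)).
    destruct (Nat.lt_ge_cases i (s (S k))); [exists k; split; lia|].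
    apply (IH (S k)); lia. }
  destruct (G m O) as [j [Hj Hji]]; [lia | lia|].
  assert ((s (S j) <= n)%nat).
  { rewrite <- Hm. destruct (Nat.eq_dec (S j) m) as [->|]; [lia|].
    apply Nat.lt_le_incl, (index_lt s m); auto; lia. }
  exists j. split; auto. rewrite <- !HP by lia.
  split; apply (incr_le t n); auto; lia.
Qed.

Definition reindex_remove (s : nat -> nat) i :=
  fun j => if Nat.ltb (s j) i then s j else pred (s j).

Lemma refines_remove t n s m P i : refines t n s m P -> (0 < i < n)%nat -> kept s m i = false ->
  refines (remove_pt t i) (n - 1) (reindex_remove s i) m P.
Proof.
  intros [Hinc [Hs [H0 [Hm HP]]]] Hi Hk. assert (Hne := not_kept s m i Hk).
  split; [apply incr_remove; auto|]. unfold reindex_remove. split; [|split; [|split]].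
  - intros j Hj. assert (Hsj := Hs j Hj).
    assert (s j <> i) by (apply Hne; lia). assert (s (S j) <> i) by (apply Hne; lia).
    destruct (Nat.ltb_spec (s j) i), (Nat.ltb_spec (s (S j)) i); lia.
  - rewrite H0. destruct (Nat.ltb_spec 0 i); lia.
  - rewrite Hm. destruct (Nat.ltb_spec n i); lia.
  - intros j Hj. rewrite <- (HP j Hj). unfold remove_pt. assert (s j <> i) by (apply Hne; lia).
    destruct (Nat.ltb_spec (s j) i).
    + destruct (Nat.ltb_spec (s j) i); [auto | lia].
    + destruct (Nat.ltb_spec (pred (s j)) i); [lia | f_equal; lia].
Qed.

Lemma unmarked_remove n s m i : (0 < i <= n)%nat -> kept s m i = false ->
  unmarked (S (n - 1)) (kept (reindex_remove s i) m) + 1 = unmarked (S n) (kept s m).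
Proof.
  intros Hi Hk. unfold unmarked. rewrite (sumR_remove n i) by lia. rewrite Hk.
  replace (S (n - 1)) with n by lia. f_equal. apply sumR_ext. intros j _.
  assert (Hne := not_kept s m i Hk).
  assert (E : kept (reindex_remove s i) m j = kept s m (if Nat.ltb j i then j else S j)).
  { unfold reindex_remove.
    destruct (kept _ m j) eqn:E1, (kept s m (if Nat.ltb j i then j else S j)) eqn:E2; auto.
    - apply kept_spec in E1. destruct E1 as [j0 [Hj0 E1]]. assert (Hn0 := Hne j0 Hj0).
      rewrite <- E2. symmetry. apply kept_spec. exists j0; split; auto.
      destruct (Nat.ltb_spec (s j0) i), (Nat.ltb_spec j i); lia.
    - apply kept_spec in E2. destruct E2 as [j0 [Hj0 E2]].
      rewrite <- E1. apply kept_spec. exists j0; split; auto.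
      destruct (Nat.ltb_spec (s j0) i), (Nat.ltb_spec j i); lia. }
  rewrite E. reflexivity.
Qed.

Lemma refines_all_kept t n s m P : refines t n s m P ->
  (forall i, (i <= n)%nat -> kept s m i = true) -> n = m /\ forall j, (j <= m)%nat -> t j = P j.
Proof.
  intros [Hinc [Hs [H0 [Hm HP]]]] Hall.
  assert (Hid : forall j, (j <= m)%nat -> s j = j).
  { induction j as [|j IH]; intros Hj; auto. assert (IHj := IH ltac:(lia)).
    assert (Hsj := Hs j ltac:(lia)).
    assert (Hle : (s (S j) <= n)%nat).
    { rewrite <- Hm. destruct (Nat.eq_dec (S j) m) as [->|]; [lia|].
      apply Nat.lt_le_incl, (index_lt s m); auto; lia. }
    destruct (proj1 (kept_spec s m (S j)) (Hall (S j) ltac:(lia))) as [j' [Hj' Ej']].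
    destruct (Nat.lt_total j' (S j)) as [L|[->|L]]; auto.
    - destruct (Nat.eq_dec j' j) as [->|]; [lia|].
      assert ((s j' < s j)%nat) by (apply (index_lt s m); auto; lia). lia.
    - assert ((s (S j) < s j')%nat) by (apply (index_lt s m); auto; lia). lia. }
  split; [rewrite <- Hm; apply Hid; lia|]. intros j Hj. rewrite <- (Hid j Hj) at 1. auto.
Qed.

Section RefinementGreedy.

Variables (f g : R -> R) (p q A B : R) (P : nat -> R) (m : nat) (psi : nat -> R).

Hypothesis HA : var_le p f (P O) (P m) A.
Hypothesis HB : var_le q g (P O) (P m) B.

Hypothesis Hpsi : forall j x y z k, (j < m)%nat -> P j <= x -> x < y -> y < z -> z <= P (S j) ->
  (1 <= k)%nat -> rpow (Rabs (f y - f x)) p <= 2 * A / INR k ->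
  rpow (Rabs (g z - g y)) q <= 2 * B / INR k -> Rabs (f y - f x) * Rabs (g z - g y) <= psi k.

Lemma exists_cheap_point t n s k : refines t n s m P -> (1 <= k)%nat ->
  INR k <= unmarked (S n) (kept s m) ->
  exists j, (S j < n)%nat /\ kept s m (S j) = false /\
    rpow (Rabs (f (t (S j)) - f (t j))) p <= 2 * A / INR k /\
    rpow (Rabs (g (t (S (S j))) - g (t (S j)))) q <= 2 * B / INR k.
Proof.
  intros HR Hk Hc. pose proof HR as [Hinc [_ [H0 [Hm HP]]]].
  assert (Hk0 : kept s m O = true) by (apply kept_spec; exists O; split; [lia | auto]).
  assert (Hkn : kept s m n = true) by (apply kept_spec; exists m; split; auto).
  assert (Ht0 : t O = P O) by (rewrite <- (HP O), H0 by lia; reflexivity).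
  assert (Htn : t n = P m) by (rewrite <- (HP m), Hm by lia; reflexivity).
  assert (HkR : 1 <= INR k) by (apply (le_INR 1); lia).
  assert (Hn : (1 <= n)%nat).
  { destruct n; [|lia]. unfold unmarked in Hc. simpl in Hc. rewrite Hk0 in Hc. lra. }
  assert (Hcnt : unmarked (n - 1) (fun j => kept s m (S j)) = unmarked (S n) (kept s m)).
  { unfold unmarked. rewrite sumR_shift, Hk0. replace n with (S (n - 1)) at 2 by lia.
    cbn [sumR]. replace (S (n - 1)) with n by lia. rewrite Hkn. ring. }
  destruct (exists_unmarked_pair (n - 1) (fun j => rpow (Rabs (f (t (S j)) - f (t j))) p)
              (fun j => rpow (Rabs (g (t (S (S j))) - g (t (S j)))) q)
              (fun j => kept s m (S j)) A B k) as [j [Hj [Hkj [Hu Hv]]]]; auto.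
  - intros j _. split; apply rpow_ge0.
  - apply Rle_trans with (pvar_sum p f t n); [apply sumR_le_len; [intros; apply rpow_ge0 | lia]|].
    apply (HA t n); auto; lra.
  - apply (HB (fun j => t (S j)) (n - 1)%nat); [intros i Hi; apply Hinc; lia | | replace (S (n - 1))%nat with n by lia; lra].
    rewrite <- Ht0. left; apply Hinc; lia.
  - rewrite Hcnt. auto.
  - exists j. repeat split; auto; lia.
Qed.

Lemma left_sum_refines_greedy K : forall t n s, refines t n s m P ->
  unmarked (S n) (kept s m) = INR K ->
  Rabs (left_sum f g t n - left_sum f g P m) <= sumR K (fun i => psi (S i)).
Proof.
  induction K as [|K IH]; intros t n s HR HK.
  - destruct (refines_all_kept t n s m P HR) as [-> Et].
    { intros i Hi. destruct (kept s m i) eqn:E; auto. exfalso.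
      assert (0 < unmarked (S n) (kept s m)); [|simpl in HK; lra].
      apply sumR_gt0; [intros j _; destruct (kept s m j); lra|].
      exists i. split; [lia|]. rewrite E. lra. }
    unfold left_sum, tagged_sum. rewrite (sumR_ext m _ (fun i => f (P i) * (g (P (S i)) - g (P i)))).
    + rewrite Rminus_diag, Rabs_R0. simpl; lra.
    + intros i Hi. rewrite !Et by lia. reflexivity.
  - destruct (exists_cheap_point t n s (S K) HR) as [j [Hj [Hkj [Hu Hv]]]];
      [lia | rewrite HK; lra|].
    pose proof HR as [Hinc _].
    assert (Hcost : Rabs (f (t (S j)) - f (t j)) * Rabs (g (t (S (S j))) - g (t (S j)))
                    <= psi (S K)).
    { destruct (refines_block t n s m P (S j) HR ltac:(lia) Hkj) as [j' [Hj' [L1 L2]]].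
      replace (S j - 1)%nat with j in L1 by lia.
      apply (Hpsi j'); auto; try lia; apply Hinc; lia. }
    assert (HK' : unmarked (S (n - 1)) (kept (reindex_remove s (S j)) m) = INR K).
    { pose proof (unmarked_remove n s m (S j) ltac:(lia) Hkj) as E.
      rewrite HK, S_INR in E. lra. }
    pose proof (IH _ _ _ (refines_remove t n s m P (S j) HR ltac:(lia) Hkj) HK') as IHK.
    pose proof (left_sum_remove f g t n j Hj) as E.
    replace (left_sum f g t n - left_sum f g P m) with
      ((left_sum f g t n - left_sum f g (remove_pt t (S j)) (n - 1))
       + (left_sum f g (remove_pt t (S j)) (n - 1) - left_sum f g P m)) by ring.
    eapply Rle_trans; [apply Rabs_triang|]. rewrite E, Rabs_mult. cbn [sumR]. lra.
Qed.

Lemma left_sum_refines_le t n s M : refines t n s m P ->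
  (forall K, sumR K (fun i => psi (S i)) <= M) ->
  Rabs (left_sum f g t n - left_sum f g P m) <= M.
Proof.
  intros HR HM. destruct (unmarked_INR (S n) (kept s m)) as [K HK].
  eapply Rle_trans; [apply (left_sum_refines_greedy K t n s HR HK) | apply HM].
Qed.

End RefinementGreedy.

Lemma var_le_rvar r h a b : finite_rvar r h a b -> var_le r h a b (real (rvar r h a b)).
Proof.
  intros Hf t n Hinc H0 Hn. unfold finite_rvar, rvar in *.
  destruct (Lub_Rbar_correct (rvar_sums r h a b)) as [Hub _].
  assert (Hs : rvar_sums r h a b (pvar_sum r h t n)) by (exists n, t; repeat split; auto).
  specialize (Hub _ Hs). rewrite <- Hf in Hub. exact Hub.
Qed.

Lemma var_le_ge0 r h a b A : a <= b -> var_le r h a b A -> 0 <= A.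
Proof. intros Hab H. apply (H (fun _ => a) O); [intros i Hi; lia | lra | lra]. Qed.

Lemma rpow_diff_le_var r h a b A x y : var_le r h a b A -> a <= x -> x < y -> y <= b ->
  rpow (Rabs (h y - h x)) r <= A.
Proof.
  intros H Hx Hxy Hy. set (t := fun i : nat => match i with O => x | _ => y end).
  replace (rpow (Rabs (h y - h x)) r) with (pvar_sum r h t 1) by (unfold pvar_sum; simpl; ring).
  apply H; auto. intros i Hi. replace i with O by lia. auto.
Qed.

Lemma diff_le_rvar_norm r h a b x y : 0 < r -> finite_rvar r h a b ->
  a <= x <= b -> a <= y <= b -> Rabs (h x - h y) <= rvar_norm r h a b.
Proof.
  intros Hr Hf Hx Hy. pose proof (var_le_rvar r h a b Hf) as HV. unfold rvar_norm.
  destruct (Rtotal_order x y) as [H|[->|H]].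
  - apply le_rpow_inv; [apply Rabs_pos | auto|].
    rewrite Rabs_minus_sym. apply (rpow_diff_le_var r h a b); auto; lra.
  - rewrite Rminus_diag, Rabs_R0. apply rpow_ge0.
  - apply le_rpow_inv; [apply Rabs_pos | auto|]. apply (rpow_diff_le_var r h a b); auto; lra.
Qed.

Lemma osc_norm_bounds h a b M : a < b ->
  (forall x y, a <= x <= b -> a <= y <= b -> Rabs (h x - h y) <= M) ->
  (forall x y, a <= x <= b -> a <= y <= b -> Rabs (h x - h y) <= osc_norm h a b) /\
  osc_norm h a b <= M.
Proof.
  intros Hab HM. unfold osc_norm.
  set (D := fun d => exists s t, a <= s /\ s < t /\ t <= b /\ d = Rabs (h t - h s)).
  destruct (Lub_Rbar_correct D) as [Hub Hlub].
  assert (Hle : Rbar_le (Lub_Rbar D) M).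
  { apply Hlub. intros d [s [t [H1 [H2 [H3 ->]]]]]. simpl. apply HM; lra. }
  assert (Hge := Hub (Rabs (h b - h a)) ltac:(exists a, b; repeat split; lra)).
  destruct (Lub_Rbar D) as [l| |]; simpl in Hle, Hge; try contradiction.
  split; auto. intros x y Hx Hy. destruct (Rtotal_order x y) as [H|[->|H]].
  - rewrite Rabs_minus_sym. apply Hub. exists x, y; repeat split; lra.
  - rewrite Rminus_diag, Rabs_R0. eapply Rle_trans; [apply Rabs_pos | apply Hge].
  - apply Hub. exists y, x; repeat split; lra.
Qed.

Lemma root_le_of_rpow_le d r C k : 0 < r -> 0 <= C -> (1 <= k)%nat ->
  rpow (Rabs d) r <= 2 * C / INR k -> Rabs d <= rpow (2 * C) (/ r) * rpow (INR k) (- / r).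
Proof.
  intros Hr HC Hk H. assert (0 < INR k) by (apply lt_0_INR; lia).
  apply le_rpow_inv in H; [|apply Rabs_pos | auto].
  rewrite rpow_div in H by lra. rewrite rpow_opp by lra. exact H.
Qed.

Lemma left_sum_young f g a b p q A B Om t n : 1 < p -> 1 < q -> 1 < / p + / q ->
  var_le p f a b A -> var_le q g a b B ->
  (forall x y, a <= x <= b -> a <= y <= b -> Rabs (f x - f y) <= Om) -> 0 <= Om ->
  rpow Om p <= A -> incr t n -> (1 <= n)%nat -> t O = a -> t n = b ->
  Rabs (left_sum f g t n - f a * (g b - g a))
  <= young_const p q * rpow 2 (1 - / q) * rpow 2 (/ q)
     * (rpow Om (1 - p * (1 - / q)) * rpow A (1 - / q) * rpow B (/ q)).
Proof.
  intros Hp Hq Hs HA HB HO HO0 HOA Hinc Hn Ht0 Htn.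
  assert (Hab : a <= b) by (rewrite <- Ht0, <- Htn; apply (incr_le t n); auto; lia).
  assert (HA0 : 0 <= A) by (eapply Rle_trans; [apply rpow_ge0 | apply HOA]).
  assert (HB0 : 0 <= B) by (apply (var_le_ge0 q g a b); auto).
  set (e := 1 - / q). set (X := rpow (2 * A) (/ p)). set (Y := rpow (2 * B) (/ q)).
  set (P := fun j : nat => match j with O => a | _ => b end).
  set (s := fun j : nat => match j with O => O | _ => n end).
  assert (HR : refines t n s 1 P).
  { split; [auto|]. split; [intros j Hj; replace j with O by lia; simpl; lia|].
    split; [reflexivity|]. split; [reflexivity|]. intros [|j] Hj; simpl; auto. }
  replace (f a * (g b - g a)) with (left_sum f g P 1) by (unfold left_sum, tagged_sum; simpl; ring).
  apply (left_sum_refines_le f g p q A B P 1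
           (young_term p q Om X Y) HA HB)
    with (s := s); [| exact HR |].
  - intros j x y z k Hj Hx Hxy Hyz Hz Hk Hu Hv. replace j with O in * by lia. simpl in Hx, Hz.
    unfold young_term. apply Rmult_le_compat; try apply Rabs_pos.
    + apply Rmin_glb; [apply HO; lra | apply root_le_of_rpow_le; auto; lra].
    + apply root_le_of_rpow_le; auto; lra.
  - intros K. eapply Rle_trans.
    { apply sumR_young_term_le; auto; [split; auto|apply rpow_ge0].
      unfold X. rewrite <- (rpow_x1 Om), <- (Rinv_r p), <- rpow_rpow by lra.
      apply rpow_le; [split; [apply rpow_ge0 | lra] | apply Rinv_0_lt_compat; lra]. }
    fold e. unfold X, Y. rewrite rpow_rpow by lra.
    replace (/ p * (p * e)) with e by (field; lra).
    rewrite !rpow_mult by lra. apply Req_le. ring.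
Qed.

(** * Fine partitions *)

Definition osc_product_le (f g : R -> R) a b eta d :=
  forall u v, a <= u -> v <= b -> v - u < d ->
  forall x y z w, u <= x <= v -> u <= y <= v -> u <= z <= v -> u <= w <= v ->
  Rabs (f x - f y) * Rabs (g z - g w) <= eta.

Lemma Rabs_diff_le_twice (h : R -> R) c x y e :
  Rabs (h x - h c) < e -> Rabs (h y - h c) < e -> Rabs (h x - h y) <= 2 * e.
Proof.
  intros H1 H2. replace (h x - h y) with ((h x - h c) + - (h y - h c)) by ring.
  eapply Rle_trans; [apply Rabs_triang|]. rewrite Rabs_Ropp. lra.
Qed.

(* Near each point one of the two functions is continuous, so the product of oscillations
   is small on a neighbourhood; compactness of [a; b] makes the radius uniform. *)
Lemma osc_product_small f g a b Mf Mg : 0 < Mf -> 0 < Mg ->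
  (forall x y, a <= x <= b -> a <= y <= b -> Rabs (f x - f y) <= Mf) ->
  (forall x y, a <= x <= b -> a <= y <= b -> Rabs (g x - g y) <= Mg) ->
  (forall x, a <= x <= b -> cont_in f a b x \/ cont_in g a b x) ->
  forall eta, 0 < eta -> exists d, 0 < d /\ osc_product_le f g a b eta d.
Proof.
  intros HMf HMg Hf Hg Hc eta Heta.
  set (Q := fun c (dl : posreal) => a <= c <= b -> forall x y z w,
    a <= x <= b -> a <= y <= b -> a <= z <= b -> a <= w <= b ->
    Rabs (x - c) < dl -> Rabs (y - c) < dl -> Rabs (z - c) < dl -> Rabs (w - c) < dl ->
    Rabs (f x - f y) * Rabs (g z - g w) <= eta).
  assert (Hex : forall c, exists dl : posreal, Q c dl).
  { intros c. destruct (classic (a <= c <= b)) as [Hcab|Hcab];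
      [|exists (mkposreal 1 Rlt_0_1); intros H; contradiction].
    destruct (Hc c Hcab) as [Hfc|Hgc].
    - destruct (Hfc (eta / (2 * Mg))) as [dl [Hdl Hd]]; [apply Rdiv_lt_0_compat; lra|].
      exists (mkposreal dl Hdl). intros _ x y z w Hx Hy Hz Hw Hxc Hyc Hzc Hwc. simpl in *.
      apply Rle_trans with (2 * (eta / (2 * Mg)) * Mg); [|apply Req_le; field; lra].
      apply Rmult_le_compat; try apply Rabs_pos; [|apply Hg; auto].
      apply (Rabs_diff_le_twice f c); apply Hd; auto.
    - destruct (Hgc (eta / (2 * Mf))) as [dl [Hdl Hd]]; [apply Rdiv_lt_0_compat; lra|].
      exists (mkposreal dl Hdl). intros _ x y z w Hx Hy Hz Hw Hxc Hyc Hzc Hwc. simpl in *.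
      apply Rle_trans with (Mf * (2 * (eta / (2 * Mf)))); [|apply Req_le; field; lra].
      apply Rmult_le_compat; try apply Rabs_pos; [apply Hf; auto|].
      apply (Rabs_diff_le_twice g c); apply Hd; auto. }
  set (dl := fun c => proj1_sig (constructive_indefinite_description _ (Hex c))).
  assert (Hdl : forall c, Q c (dl c))
    by (intros c; unfold dl; destruct (constructive_indefinite_description _ (Hex c)); auto).
  assert (Hpos : forall c, 0 < dl c / 2) by (intros c; apply Rdiv_lt_0_compat; [apply cond_pos | lra]).
  destruct (compactness_value_1d a b (fun c => mkposreal _ (Hpos c))) as [d Hd].
  exists d. split; [apply cond_pos|]. intros u v Hu Hv Huv x y z w Hx Hy Hz Hw.
  apply NNPP. intros Hn. apply (Hd u ltac:(lra)). intros [c [Hcab [Huc Hdc]]]. apply Hn. simpl in *.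
  assert (Hcl : forall r, u <= r <= v -> Rabs (r - c) < dl c).
  { intros r Hr. replace (r - c) with ((r - u) + (u - c)) by ring.
    eapply Rle_lt_trans; [apply Rabs_triang|]. rewrite (Rabs_right (r - u)) by lra. lra. }
  apply (Hdl c Hcab); try lra; apply Hcl; lra.
Qed.

Definition endpoint_tagged (dl : R) n (t rho : nat -> R) :=
  incr t n /\ (forall j, (j < n)%nat -> t (S j) - t j < dl) /\
  (forall j, (j < n)%nat -> rho j = t j \/ rho j = t (S j)).

Lemma endpoint_tagged_snoc f g dl n t rho y nu : endpoint_tagged dl n t rho ->
  t n < y -> y - t n < dl -> nu = t n \/ nu = y ->
  exists t' rho', endpoint_tagged dl (S n) t' rho' /\ t' O = t O /\ t' (S n) = y /\
    tagged_sum f g t' rho' (S n) = tagged_sum f g t rho n + f nu * (g y - g (t n)).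
Proof.
  intros [Hinc [Hmesh Htag]] Hy Hdy Hnu.
  set (t' := fun j => if Nat.leb j n then t j else y).
  set (rho' := fun j => if Nat.ltb j n then rho j else nu).
  assert (Et : forall j, (j <= n)%nat -> t' j = t j)
    by (intros j Hj; unfold t'; destruct (Nat.leb_spec j n); [auto | lia]).
  assert (EtS : t' (S n) = y) by (unfold t'; destruct (Nat.leb_spec (S n) n); [lia | auto]).
  assert (Er : forall j, (j < n)%nat -> rho' j = rho j)
    by (intros j Hj; unfold rho'; destruct (Nat.ltb_spec j n); [auto | lia]).
  assert (ErS : rho' n = nu) by (unfold rho'; destruct (Nat.ltb_spec n n); [lia | auto]).
  exists t', rho'. split; [split; [|split] | split; [|split]].
  - intros j Hj. destruct (Nat.eq_dec j n) as [->|].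
    + rewrite EtS, Et by lia. auto.
    + rewrite !Et by lia. apply Hinc; lia.
  - intros j Hj. destruct (Nat.eq_dec j n) as [->|].
    + rewrite EtS, Et by lia. auto.
    + rewrite !Et by lia. apply Hmesh; lia.
  - intros j Hj. destruct (Nat.eq_dec j n) as [->|].
    + rewrite ErS, EtS, Et by lia. auto.
    + rewrite Er, !Et by lia. apply Htag; lia.
  - apply Et; lia.
  - auto.
  - unfold tagged_sum. cbn [sumR]. rewrite ErS, EtS, Et by lia. f_equal.
    apply sumR_ext. intros j Hj. rewrite Er, !Et by lia. reflexivity.
Qed.

(* Splitting each interval at its tag turns every tag into an endpoint. *)
Lemma tagged_sum_endpoint_tags f g dl : forall l (x nu : nat -> R),
  incr x l -> (forall i, (i < l)%nat -> x i <= nu i <= x (S i)) ->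
  (forall i, (i < l)%nat -> x (S i) - x i < dl) ->
  exists n t rho, endpoint_tagged dl n t rho /\ t O = x O /\ t n = x l /\
    tagged_sum f g x nu l = tagged_sum f g t rho n.
Proof.
  induction l as [|l IH]; intros x nu Hx Hnu Hd.
  { exists O, x, nu. repeat split; auto; intros; lia. }
  destruct (IH x nu (fun i Hi => Hx i ltac:(lia)) (fun i Hi => Hnu i ltac:(lia))
              (fun i Hi => Hd i ltac:(lia))) as [n [t [rho [HT [H0 [Hn Hs]]]]]].
  assert (Hxl := Hx l ltac:(lia)). assert (Hnl := Hnu l ltac:(lia)). assert (Hdl := Hd l ltac:(lia)).
  assert (Hsum : tagged_sum f g x nu (S l)
                 = tagged_sum f g t rho n + f (nu l) * (g (x (S l)) - g (t n)))
    by (unfold tagged_sum in *; cbn [sumR]; rewrite Hs, Hn; reflexivity).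
  destruct (classic (nu l = x l \/ nu l = x (S l))) as [Hend|Hmid].
  - destruct (endpoint_tagged_snoc f g dl n t rho (x (S l)) (nu l) HT)
      as [t' [rho' [HT' [H0' [Hn' Hs']]]]]; rewrite ?Hn; try lra; try tauto.
    exists (S n), t', rho'. split; [auto|]. split; [congruence|]. split; [auto|].
    rewrite Hsum, Hs'. reflexivity.
  - assert (x l < nu l < x (S l)) by (destruct Hnl as [[H1|H1] [H2|H2]]; split; auto;
      exfalso; apply Hmid; first [left; congruence | right; congruence]).
    destruct (endpoint_tagged_snoc f g dl n t rho (nu l) (nu l) HT)
      as [t1 [rho1 [HT1 [H01 [Hn1 Hs1]]]]]; rewrite ?Hn; try lra; try tauto.
    destruct (endpoint_tagged_snoc f g dl (S n) t1 rho1 (x (S l)) (nu l) HT1)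
      as [t2 [rho2 [HT2 [H02 [Hn2 Hs2]]]]]; rewrite ?Hn1; try lra; try tauto.
    exists (S (S n)), t2, rho2. split; [auto|]. split; [congruence|]. split; [auto|].
    rewrite Hsum, Hs2, Hs1, Hn1. ring.
Qed.

Lemma endpoint_tags_vs_left f g t rho n :
  (forall j, (j < n)%nat -> rho j = t j \/ rho j = t (S j)) ->
  Rabs (tagged_sum f g t rho n - left_sum f g t n)
  <= sumR n (fun j => Rabs (f (t (S j)) - f (t j)) * Rabs (g (t (S j)) - g (t j))).
Proof.
  intros H. unfold left_sum, tagged_sum. rewrite <- sumR_minus.
  eapply Rle_trans; [apply Rabs_sumR|]. apply sumR_le. intros j Hj. rewrite <- Rabs_mult.
  destruct (H j Hj) as [-> | ->].
  - rewrite Rminus_diag, Rabs_R0. apply Rabs_pos.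
  - apply Req_le. f_equal. ring.
Qed.

Lemma finite_choice (Q : nat -> nat -> Prop) m : (forall j, (j <= m)%nat -> exists i, Q j i) ->
  exists s, forall j, (j <= m)%nat -> Q j (s j).
Proof.
  induction m as [|m IH]; intros H.
  - destruct (H O (le_n O)) as [i Hi]. exists (fun _ => i). intros j Hj.
    replace j with O by lia; auto.
  - destruct IH as [s Hs]; [intros; apply H; lia|]. destruct (H (S m) (le_n _)) as [i Hi].
    exists (fun j => if Nat.eqb j (S m) then i else s j). intros j Hj.
    destruct (Nat.eqb_spec j (S m)) as [->|]; [auto | apply Hs; lia].
Qed.

Lemma incr_inj t n i j : incr t n -> (i <= n)%nat -> (j <= n)%nat -> t i = t j -> i = j.
Proof.
  intros H Hi Hj E. destruct (Nat.lt_total i j) as [L|[L|L]]; auto.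
  - assert (t i < t j) by (apply (incr_lt t n); auto). lra.
  - assert (t j < t i) by (apply (incr_lt t n); auto). lra.
Qed.

Lemma incr_reflect t n i j : incr t n -> (i <= n)%nat -> (j <= n)%nat -> t i < t j -> (i < j)%nat.
Proof.
  intros H Hi Hj E. destruct (Nat.lt_ge_cases i j); auto.
  assert (t j <= t i) by (apply (incr_le t n); auto). lra.
Qed.

Lemma refines_of_points t n P m : incr t n -> incr P m -> t O = P O -> t n = P m ->
  (forall j, (j <= m)%nat -> exists i, (i <= n)%nat /\ t i = P j) -> exists s, refines t n s m P.
Proof.
  intros Ht HP H0 Hn Hr.
  destruct (finite_choice (fun j i => (i <= n)%nat /\ t i = P j) m Hr) as [s Hs].
  exists s. split; [auto|]. split; [|split; [|split]].
  - intros j Hj. destruct (Hs j ltac:(lia)) as [H1 E1], (Hs (S j) ltac:(lia)) as [H2 E2].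
    apply (incr_reflect t n); auto. rewrite E1, E2. apply HP; auto.
  - destruct (Hs O ltac:(lia)) as [H1 E1]. apply (incr_inj t n); auto; [lia|]. congruence.
  - destruct (Hs m ltac:(lia)) as [H1 E1]. apply (incr_inj t n); auto. congruence.
  - intros j Hj. apply Hs; auto.
Qed.

Lemma locate_point t n u : t O <= u -> u <= t n ->
  (exists i, (i <= n)%nat /\ t i = u) \/ (exists i, (i < n)%nat /\ t i < u < t (S i)).
Proof.
  induction n as [|n IH]; intros H1 H2; [left; exists O; split; [auto | lra]|].
  destruct (Rle_lt_dec u (t n)) as [H|H].
  - destruct (IH H1 H) as [[i [Hi E]]|[i [Hi E]]]; [left | right]; exists i; split; auto; lia.
  - destruct (Req_dec u (t (S n))) as [E|E]; [left; exists (S n); split; auto|].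
    right; exists n; split; [lia | lra].
Qed.

Lemma insert_point t n u : incr t n -> t O <= u -> u <= t n ->
  exists t' n', incr t' n' /\ t' O = t O /\ t' n' = t n /\
    (forall i, (i <= n)%nat -> exists i', (i' <= n')%nat /\ t' i' = t i) /\
    (exists i', (i' <= n')%nat /\ t' i' = u).
Proof.
  intros Hinc H1 H2. destruct (locate_point t n u H1 H2) as [[i [Hi E]]|[i [Hi E]]].
  { exists t, n. repeat split; auto; [intros j Hj; exists j; split|exists i; split]; auto. }
  set (t' := fun j => if Nat.leb j i then t j else if Nat.eqb j (S i) then u else t (pred j)).
  assert (E1 : forall j, (j <= i)%nat -> t' j = t j)
    by (intros j Hj; unfold t'; destruct (Nat.leb_spec j i); [auto | lia]).
  assert (E2 : t' (S i) = u)
    by (unfold t'; destruct (Nat.leb_spec (S i) i); [lia | rewrite Nat.eqb_refl; auto]).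
  assert (E3 : forall j, (i < j)%nat -> t' (S j) = t j).
  { intros j Hj; unfold t'. destruct (Nat.leb_spec (S j) i); [lia|].
    destruct (Nat.eqb_spec (S j) (S i)); [lia | auto]. }
  exists t', (S n). split; [|split; [|split; [|split]]].
  - intros j Hj. destruct (Nat.lt_total j i) as [L|[->|L]].
    + rewrite !E1 by lia. apply Hinc; lia.
    + rewrite E2, E1 by lia. lra.
    + destruct j as [|j]; [lia|]. destruct (Nat.eq_dec j i) as [->|].
      * rewrite (E3 (S i)), E2 by lia. lra.
      * rewrite !E3 by lia. apply Hinc; lia.
  - rewrite E1 by lia; auto.
  - rewrite E3 by lia; auto.
  - intros j Hj. destruct (Nat.le_gt_cases j i).
    + exists j; split; [lia | apply E1; auto].
    + exists (S j); split; [lia | apply E3; auto].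
  - exists (S i); split; [lia | auto].
Qed.

Lemma common_refinement t1 n1 t2 n2 : incr t1 n1 -> incr t2 n2 -> t1 O = t2 O -> t1 n1 = t2 n2 ->
  exists t n s1 s2, refines t n s1 n1 t1 /\ refines t n s2 n2 t2.
Proof.
  intros H1 H2 E0 En.
  assert (Main : forall k, (k <= n2)%nat -> exists t n, incr t n /\ t O = t1 O /\ t n = t1 n1 /\
            (forall j, (j <= n1)%nat -> exists i, (i <= n)%nat /\ t i = t1 j) /\
            (forall j, (j <= k)%nat -> exists i, (i <= n)%nat /\ t i = t2 j)).
  { induction k as [|k IH]; intros Hk.
    - exists t1, n1. do 3 (split; [auto|]). split.
      + intros j Hj. exists j. split; auto.
      + intros j Hj. replace j with O by lia. exists O. split; [lia | auto].
    - destruct (IH ltac:(lia)) as [t [n [Ht [Ht0 [Htn [Hr1 Hr2]]]]]].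
      destruct (insert_point t n (t2 (S k)) Ht) as [t' [n' [Ht' [Ht0' [Htn' [Hmap Hu]]]]]].
      { rewrite Ht0, E0. apply (incr_le t2 n2); auto; lia. }
      { rewrite Htn, En. apply (incr_le t2 n2); auto; lia. }
      exists t', n'. split; [exact Ht'|]. split; [congruence|]. split; [congruence|]. split.
      + intros j Hj. destruct (Hr1 j Hj) as [i [Hi Ei]], (Hmap i Hi) as [i' [Hi' Ei']].
        exists i'; split; congruence.
      + intros j Hj. destruct (Nat.eq_dec j (S k)) as [->|]; auto.
        destruct (Hr2 j ltac:(lia)) as [i [Hi Ei]], (Hmap i Hi) as [i' [Hi' Ei']].
        exists i'; split; congruence. }
  destruct (Main n2 (le_n _)) as [t [n [Ht [Ht0 [Htn [Hr1 Hr2]]]]]].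
  destruct (refines_of_points t n t1 n1 Ht H1 Ht0 Htn Hr1) as [s1 Hs1].
  destruct (refines_of_points t n t2 n2 Ht H2 ltac:(congruence) ltac:(congruence) Hr2) as [s2 Hs2].
  exists t, n, s1, s2; auto.
Qed.

Definition fine_tagged (a b dl : R) l (x nu : nat -> R) :=
  x O = a /\ x l = b /\ incr x l /\ (forall i, (i < l)%nat -> x i <= nu i <= x (S i)) /\
  (forall i, (i < l)%nat -> x (S i) - x i < dl).

Section FineSums.

Variables (f g : R -> R) (a b p q A B eta d : R).
Hypotheses (Hp : 1 < p) (Hq : 1 < q) (Hs : 1 < / p + / q).
Hypotheses (HA : var_le p f a b A) (HB : var_le q g a b B) (HA0 : 0 <= A) (HB0 : 0 <= B).
Hypotheses (Heta : 0 <= eta) (Hd : osc_product_le f g a b eta d).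

Let Z := rpow (2 * A) (/ p) * rpow (2 * B) (/ q).

Lemma cost_le df dg k : (1 <= k)%nat ->
  rpow (Rabs df) p <= 2 * A / INR k -> rpow (Rabs dg) q <= 2 * B / INR k ->
  Rabs df * Rabs dg <= Z * rpow (INR k) (- (/ p + / q)).
Proof.
  intros Hk Hu Hv. assert (0 < INR k) by (apply lt_0_INR; lia).
  rewrite Ropp_plus_distr, rpow_plus by lra.
  replace (Z * (rpow (INR k) (- / p) * rpow (INR k) (- / q))) with
    (rpow (2 * A) (/ p) * rpow (INR k) (- / p) * (rpow (2 * B) (/ q) * rpow (INR k) (- / q)))
    by (unfold Z; ring).
  apply Rmult_le_compat; try apply Rabs_pos; apply root_le_of_rpow_le; auto; lra.
Qed.

Lemma Z_ge0 : 0 <= Z.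
Proof. unfold Z. apply Rmult_le_pos; apply rpow_ge0. Qed.

Lemma endpoint_tag_error t n : incr t n -> t O = a -> t n = b ->
  (forall j, (j < n)%nat -> t (S j) - t j < d) ->
  sumR n (fun j => Rabs (f (t (S j)) - f (t j)) * Rabs (g (t (S j)) - g (t j)))
  <= decay_bound eta Z (/ p + / q).
Proof.
  intros Hinc H0 Hn Hmesh. pose proof Z_ge0.
  assert (Hin : forall j, (j <= n)%nat -> a <= t j <= b) by (intros; apply (incr_in t n); auto; lra).
  eapply Rle_trans.
  { apply (sumR_greedy n (fun j => rpow (Rabs (f (t (S j)) - f (t j))) p)
             (fun j => rpow (Rabs (g (t (S j)) - g (t j))) q) _
             (fun k => Rmin eta (Z * rpow (INR k) (- (/ p + / q)))) A B).
    - intros j _. split; apply rpow_ge0.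
    - apply (HA t n); auto; lra.
    - apply (HB t n); auto; lra.
    - intros j k Hj Hk Hu Hv. apply Rmin_glb; [|apply cost_le; auto].
      assert (t j < t (S j)) by (apply Hinc; auto). destruct (Hin j), (Hin (S j)); try lia.
      apply (Hd (t j) (t (S j))); auto; try lra; apply Hmesh; auto. }
  apply sumR_min_eta_le; auto.
Qed.

Lemma refinement_error t n s m P : refines t n s m P -> incr P m -> P O = a -> P m = b ->
  (forall j, (j < m)%nat -> P (S j) - P j < d) ->
  Rabs (left_sum f g t n - left_sum f g P m) <= decay_bound eta Z (/ p + / q).
Proof.
  intros HR HP H0 Hm Hmesh. pose proof Z_ge0.
  apply (left_sum_refines_le f g p q A B P m (fun k => Rmin eta (Z * rpow (INR k) (- (/ p + / q)))))
    with (s := s); [rewrite H0, Hm; auto | rewrite H0, Hm; auto | | auto | ].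
  - intros j x y z k Hj Hx Hxy Hyz Hz Hk Hu Hv. apply Rmin_glb; [|apply cost_le; auto].
    destruct (incr_in P m a b j HP ltac:(lra) ltac:(lra) ltac:(lia)).
    destruct (incr_in P m a b (S j) HP ltac:(lra) ltac:(lra) ltac:(lia)).
    apply (Hd (P j) (P (S j))); auto; lra.
  - intros K. apply sumR_min_eta_le; auto.
Qed.

(* Both sums are compared with the left sum of a common refinement. *)
Lemma fine_tagged_sums_close l1 x1 nu1 l2 x2 nu2 :
  fine_tagged a b d l1 x1 nu1 -> fine_tagged a b d l2 x2 nu2 ->
  Rabs (tagged_sum f g x1 nu1 l1 - tagged_sum f g x2 nu2 l2) <= 4 * decay_bound eta Z (/ p + / q).
Proof.
  intros [H10 [H1l [H1i [H1t H1m]]]] [H20 [H2l [H2i [H2t H2m]]]].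
  destruct (tagged_sum_endpoint_tags f g d l1 x1 nu1 H1i H1t H1m)
    as [n1 [t1 [r1 [[T1i [T1d T1r]] [T10 [T1n ->]]]]]].
  destruct (tagged_sum_endpoint_tags f g d l2 x2 nu2 H2i H2t H2m)
    as [n2 [t2 [r2 [[T2i [T2d T2r]] [T20 [T2n ->]]]]]].
  rewrite H10 in T10. rewrite H1l in T1n. rewrite H20 in T20. rewrite H2l in T2n.
  destruct (common_refinement t1 n1 t2 n2 T1i T2i ltac:(congruence) ltac:(congruence))
    as [t [n [s1 [s2 [HS1 HS2]]]]].
  pose proof (Rle_trans _ _ _ (endpoint_tags_vs_left f g t1 r1 n1 T1r)
                (endpoint_tag_error t1 n1 T1i T10 T1n T1d)) as E1.
  pose proof (Rle_trans _ _ _ (endpoint_tags_vs_left f g t2 r2 n2 T2r)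
                (endpoint_tag_error t2 n2 T2i T20 T2n T2d)) as E2.
  pose proof (refinement_error t n s1 n1 t1 HS1 T1i T10 T1n T1d) as D1.
  pose proof (refinement_error t n s2 n2 t2 HS2 T2i T20 T2n T2d) as D2.
  replace (tagged_sum f g t1 r1 n1 - tagged_sum f g t2 r2 n2) with
    ((tagged_sum f g t1 r1 n1 - left_sum f g t1 n1) - (left_sum f g t n - left_sum f g t1 n1)
     + (left_sum f g t n - left_sum f g t2 n2) - (tagged_sum f g t2 r2 n2 - left_sum f g t2 n2))
    by ring.
  assert (Htri : forall u v w z, Rabs (u - v + w - z) <= Rabs u + Rabs v + Rabs w + Rabs z)
    by (intros; unfold Rabs; repeat destruct Rcase_abs; lra).
  eapply Rle_trans; [apply Htri | lra].
Qed.

End FineSums.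

(** * The integral *)

Lemma tagged_sums_cauchy f g a b p q : 1 < p -> 1 < q -> 1 < / p + / q -> a < b ->
  (forall x, a <= x <= b -> cont_in f a b x \/ cont_in g a b x) ->
  finite_rvar p f a b -> finite_rvar q g a b ->
  forall eps, 0 < eps -> exists dl, 0 < dl /\ forall l1 x1 nu1 l2 x2 nu2,
    fine_tagged a b dl l1 x1 nu1 -> fine_tagged a b dl l2 x2 nu2 ->
    Rabs (tagged_sum f g x1 nu1 l1 - tagged_sum f g x2 nu2 l2) < eps.
Proof.
  intros Hp Hq Hs Hab Hc Hf Hg eps Heps.
  set (A := real (rvar p f a b)). set (B := real (rvar q g a b)).
  pose proof (var_le_rvar p f a b Hf) as HA. pose proof (var_le_rvar q g a b Hg) as HB.
  assert (HA0 : 0 <= A) by (apply (var_le_ge0 p f a b); auto; lra).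
  assert (HB0 : 0 <= B) by (apply (var_le_ge0 q g a b); auto; lra).
  destruct (decay_bound_small (rpow (2 * A) (/ p) * rpow (2 * B) (/ q)) (/ p + / q) (eps / 4))
    as [eta [Heta Hsmall]]; [apply Rmult_le_pos; apply rpow_ge0 | lra | lra |].
  assert (Hosc : forall r h, 0 < r -> finite_rvar r h a b ->
            forall x y, a <= x <= b -> a <= y <= b -> Rabs (h x - h y) <= rvar_norm r h a b + 1).
  { intros r h Hr Hh x y Hx Hy. pose proof (diff_le_rvar_norm r h a b x y Hr Hh Hx Hy). lra. }
  assert (Hnorm : forall r h, 0 < rvar_norm r h a b + 1)
    by (intros; pose proof (rpow_ge0 (real (rvar r h a b)) (/ r)); unfold rvar_norm; lra).
  destruct (osc_product_small f g a b (rvar_norm p f a b + 1) (rvar_norm q g a b + 1)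
              (Hnorm p f) (Hnorm q g) (Hosc p f ltac:(lra) Hf) (Hosc q g ltac:(lra) Hg) Hc eta Heta)
    as [d [Hd Hprod]].
  exists d. split; auto. intros l1 x1 nu1 l2 x2 nu2 H1 H2.
  eapply Rle_lt_trans; [apply (fine_tagged_sums_close f g a b p q A B eta d); auto; lra | lra].
Qed.

Definition uniform_pts a b N := fun i => a + INR i * (b - a) / INR (S N).

Lemma uniform_pts_fine a b N dl : a < b -> (b - a) / INR (S N) < dl ->
  fine_tagged a b dl (S N) (uniform_pts a b N) (uniform_pts a b N).
Proof.
  intros Hab Hdl. pose proof (INR_S_gt0 N).
  assert (Hstep : forall i, uniform_pts a b N (S i) - uniform_pts a b N i = (b - a) / INR (S N))
    by (intros i; unfold uniform_pts; rewrite S_INR; field; lra).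
  assert (0 < (b - a) / INR (S N)) by (apply Rdiv_lt_0_compat; lra).
  split; [unfold uniform_pts; change (INR 0) with 0; field; lra|]. split; [unfold uniform_pts; field; lra|].
  split; [|split]; intros i _; specialize (Hstep i); lra.
Qed.

Lemma uniform_mesh_small a b dl : a < b -> 0 < dl ->
  exists N0, forall N, (N0 <= N)%nat -> (b - a) / INR (S N) < dl.
Proof.
  intros Hab Hd. destruct (ceil_nat ((b - a) / dl)) as [K [HK _]].
  { apply Rlt_le, Rdiv_lt_0_compat; lra. }
  exists K. intros N HN. assert (INR K <= INR N) by (apply le_INR; auto).
  pose proof (INR_S_gt0 N). rewrite S_INR in *.
  apply Rmult_lt_reg_r with (INR N + 1); [lra|].
  unfold Rdiv in *. rewrite Rmult_assoc, Rinv_l by lra.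
  apply Rmult_le_compat_r with (r := dl) in HK; [|lra].
  rewrite Rmult_assoc, Rinv_l in HK by lra. nra.
Qed.

Lemma RS_integral_of_cauchy f g a b : a < b ->
  (forall eps, 0 < eps -> exists dl, 0 < dl /\ forall l1 x1 nu1 l2 x2 nu2,
     fine_tagged a b dl l1 x1 nu1 -> fine_tagged a b dl l2 x2 nu2 ->
     Rabs (tagged_sum f g x1 nu1 l1 - tagged_sum f g x2 nu2 l2) < eps) ->
  exists I, is_RS_integral f g a b I /\
            Un_cv (fun N => left_sum f g (uniform_pts a b N) (S N)) I.
Proof.
  intros Hab Hcauchy. set (u := fun N => left_sum f g (uniform_pts a b N) (S N)).
  assert (Hcc : Cauchy_crit u).
  { intros eps Heps. destruct (Hcauchy eps Heps) as [dl [Hdl Hc]].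
    destruct (uniform_mesh_small a b dl Hab Hdl) as [N0 HN0].
    exists N0. intros N M HN HM. apply Hc; apply uniform_pts_fine; auto. }
  destruct (Rcomplete.R_complete u Hcc) as [I HI]. exists I. split; auto.
  intros eps Heps. destruct (Hcauchy (eps / 2) ltac:(lra)) as [dl [Hdl Hc]].
  exists dl. split; auto. intros l x nu Hx0 Hxl Hinc Htag Hmesh.
  destruct (uniform_mesh_small a b dl Hab Hdl) as [N0 HN0].
  destruct (HI (eps / 2) ltac:(lra)) as [N1 HN1].
  assert (HN := HN1 (max N0 N1) ltac:(lia)). unfold Rdist in HN.
  assert (Hd : Rabs (tagged_sum f g x nu l - u (max N0 N1)) < eps / 2).
  { apply Hc; [exact (conj Hx0 (conj Hxl (conj Hinc (conj Htag Hmesh))))|].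
    apply uniform_pts_fine; auto; apply HN0; lia. }
  replace (sumR l (fun i => f (nu i) * (g (x (S i)) - g (x i))) - I)
    with ((tagged_sum f g x nu l - u (max N0 N1)) + (u (max N0 N1) - I)) by (unfold tagged_sum; ring).
  eapply Rle_lt_trans; [apply Rabs_triang | lra].
Qed.

Lemma Un_cv_Rabs_le u I c K : Un_cv u I -> (forall N, Rabs (u N - c) <= K) -> Rabs (I - c) <= K.
Proof.
  intros Hcv Hu. apply Rnot_lt_le. intros Hlt.
  destruct (Hcv (Rabs (I - c) - K) ltac:(lra)) as [N HN]. specialize (HN N (le_n N)).
  specialize (Hu N). unfold Rdist in HN. rewrite Rabs_minus_sym in HN.
  pose proof (Rabs_triang (I - u N) (u N - c)). replace (I - u N + (u N - c)) with (I - c) in H by ring.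
  lra.
Qed.

Theorem corollary2 (p q : R) (hp : 1 < p) (hq : 1 < q) (hpq : / p + / q > 1) :
  exists C : R,
    forall (a b : R) (f g : R -> R),
      a < b ->
      (forall x, a <= x <= b -> cont_in f a b x \/ cont_in g a b x) ->
      finite_rvar p f a b ->
      finite_rvar q g a b ->
      exists I : R,
        is_RS_integral f g a b I /\
        Rabs (I - f a * (g b - g a)) <=
          C * rpow (rvar_norm p f a b) (p - p / q)
            * rpow (osc_norm f a b) (1 + p / q - p)
            * rvar_norm q g a b.
Proof.
  exists (young_const p q * rpow 2 (1 - / q) * rpow 2 (/ q)).
  intros a b f g hab hcont hf hg.
  set (A := real (rvar p f a b)). set (B := real (rvar q g a b)). set (Om := osc_norm f a b).
  assert (HA0 : 0 <= A) by (apply (var_le_ge0 p f a b); [lra | apply var_le_rvar; auto]).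
  destruct (osc_norm_bounds f a b (rvar_norm p f a b) hab) as [HO HOA].
  { intros x y Hx Hy. apply diff_le_rvar_norm; auto; lra. }
  fold Om in HO, HOA.
  assert (HO0 : 0 <= Om) by (eapply Rle_trans; [apply Rabs_pos | apply (HO a a); lra]).
  destruct (RS_integral_of_cauchy f g a b hab (tagged_sums_cauchy f g a b p q hp hq hpq hab hcont hf hg))
    as [I [HI Hcv]].
  exists I. split; [exact HI|].
  eapply Rle_trans.
  { apply (Un_cv_Rabs_le _ I _ _ Hcv). intros N.
    destruct (uniform_pts_fine a b N ((b - a) / INR (S N) + 1) hab ltac:(lra)) as [H0 [Hn [Hinc _]]].
    apply (left_sum_young f g a b p q A B Om); auto; try lra; try lia;
      try apply var_le_rvar; auto.
    apply rpow_le_of_le_rpow_inv; auto; lra. }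
  unfold rvar_norm. fold A B. rewrite rpow_rpow by auto.
  replace (/ p * (p - p / q)) with (1 - / q) by (field; lra).
  replace (1 + p / q - p) with (1 - p * (1 - / q)) by (field; lra).
  apply Req_le. ring.
Qed.
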